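(* For every $a\in\mathbb N^{\mathbb N}$ and $n\in\mathbb N$, $q_n(a)\le\#\Omega_{a,n}\le10\,q_n(a)$.
   Context: For $a=(a_n)\in\mathbb N^{\mathbb N}$, $q_n(a)$ are the continued fraction denominators: $q_{-1}=0$, $q_0=1$, $q_{n+1}=a_{n+1}q_n+q_{n-1}$. For $n\ge1$ let $\mathcal A_n=\{(\mathbf1,k)_n:1\le k\le n+1\}\cup\{(\mathbf2,1)_n\}\cup\{(\mathbf3,k)_n:1\le k\le n\}$, type $\mathbf t_{(\mathbf t,k)_n}=\mathbf t$. For $\mathbf t\in\{\mathbf1,\mathbf2,\mathbf3\}$, $\hat e\in\mathcal A_n$: $\mathbf t\to\hat e$ iff $(\mathbf t,\hat e)$ is $(\mathbf1,(\mathbf2,1)_n)$, $(\mathbf2,(\mathbf1,k)_n)$ with $k\le n+1$, $(\mathbf2,(\mathbf3,k)_n)$ with $k\le n$, $(\mathbf3,(\mathbf1,k)_n)$ with $k\le n$, or $(\mathbf3,(\mathbf3,k)_n)$ with $k\le n-1$; $e\to\hat e$ iff $\mathbf t_e\to\hat e$. $\Omega_{a,n}$ is the set of words $w_1\cdots w_n$ with $w_j\in\mathcal A_{a_j}$ and $w_j\to w_{j+1}$ for $1\le j<n$. *)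

From HB Require Import structures.
From mathcomp Require Import all_boot.
Set Implicit Arguments. Unset Strict Implicit. Unset Printing Implicit Defensive.

(* The sequence a = (a_1, a_2, ...) is represented by a : nat -> nat,
   with a_j = a j for j >= 1 (the value a 0 is irrelevant). *)

(* (q_{n-1}, q_n), with q_{-1} = 0, q_0 = 1, q_{n+1} = a_{n+1} q_n + q_{n-1}. *)
Fixpoint qpair (a : nat -> nat) (n : nat) : nat * nat :=
  match n with
  | 0 => (0, 1)
  | m.+1 => let: (qm1, qm) := qpair a m in (qm, a m.+1 * qm + qm1)
  end.

Definition q (a : nat -> nat) (n : nat) : nat := (qpair a n).2.

Inductive typ := T1 | T2 | T3.

Definition typ_eqb (x y : typ) : bool :=
  match x, y with
  | T1, T1 | T2, T2 | T3, T3 => true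
  | _, _ => false
  end.

Lemma typ_eqP : Equality.axiom typ_eqb.
Proof. by case; case; constructor. Qed.

HB.instance Definition _ := hasDecEq.Build typ typ_eqP.

(* A letter (t, k)_m is represented by the pair (t, k); its alphabet index m
   is recorded by membership in A_m. *)
Definition letter := (typ * nat)%type.

Definition inA (m : nat) (e : letter) : bool :=
  match e with
  | (T1, k) => (1 <= k) && (k <= m.+1)
  | (T2, k) => k == 1
  | (T3, k) => (1 <= k) && (k <= m)
  end.

Definition arrowT (t : typ) (m : nat) (e : letter) : bool :=
  match t, e with
  | T1, (T2, k) => k == 1
  | T2, (T1, k) => k <= m.+1
  | T2, (T3, k) => k <= m
  | T3, (T1, k) => k <= m
  | T3, (T3, k) => k <= m.-1
  | _, _ => false
  end.

Definition arrow (e : letter) (m : nat) (e' : letter) : bool := arrowT e.1 m e'.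

(* w = w_1 ... w_n is represented by the list [:: w_1; ...; w_n],
   i.e. w_j = nth w0 w (j-1). *)
Definition Omega (a : nat -> nat) (n : nat) (w : seq letter) : Prop :=
  size w = n /\
  (forall j, 1 <= j <= n -> inA (a j) (nth (T2, 1) w j.-1)) /\
  (forall j, 1 <= j < n ->
     arrow (nth (T2, 1) w j.-1) (a j.+1) (nth (T2, 1) w j)).

From mathcomp Require Import all_boot zify.
Set Implicit Arguments. Unset Strict Implicit. Unset Printing Implicit Defensive.

(* Sort the words of Omega_{a,n} by the type of their last letter, with counts
   c1, c2, c3.  Appending a letter of A_m maps (c1, c2, c3) linearly by the
   matrix [nfollow], under which the pair (c1 - c3, c2 + c3) follows the
   continuant recurrence (x, y) |-> (y, m y + x).  The first letter is
   unconstrained, so the recurrence starts from (1, a_1 + 1): the pair is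
   (q_{n-1}, q_n) computed with a_1 replaced by a_1 + 1, which lies between
   (q_{n-1}(a), q_n(a)) and twice it.  Hence
   q_n <= c2 + c3 <= #Omega_{a,n} = c3 + (c1 - c3) + (c2 + c3) <= 6 q_n. *)

Definition alphabet (m : nat) : seq letter :=
  [seq (T1, k) | k <- iota 1 m.+1] ++ (T2, 1) :: [seq (T3, k) | k <- iota 1 m].

Lemma mem_map_pair (t t' : typ) (k : nat) (s : seq nat) :
  ((t, k) \in [seq (t', i) | i <- s]) = (t == t') && (k \in s).
Proof.
apply/mapP/andP => [[i si [-> ->]] | [/eqP -> ks]]; first by rewrite eqxx.
by exists k.
Qed.

Lemma mem_alphabet m e : (e \in alphabet m) = inA m e.
Proof.
case: e => [[] k]; rewrite mem_cat -cat1s mem_cat !mem_map_pair mem_seq1 !mem_iota;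
  by rewrite /= ?xpair_eqE /=; lia.
Qed.

Lemma alphabet_uniq m : uniq (alphabet m).
Proof.
have pair_inj t : injective (pair t : nat -> letter) by move=> i j [].
rewrite cat_uniq (cons_uniq (T2, 1)) -(cat1s (T2, 1)) has_cat has_seq1.
rewrite !mem_map_pair !map_inj_uniq ?iota_uniq // !andbT /= -all_predC.
by apply/allP => _ /mapP [k _ ->]; rewrite /= in_cons mem_map_pair.
Qed.

Definition nfollow (t' t : typ) (m : nat) : nat :=
  match t', t with
  | T1, T2 => 1
  | T2, T1 => m.+1
  | T2, T3 => m
  | T3, T1 => m
  | T3, T3 => m.-1
  | _, _ => 0
  end.

Lemma count_leq_iota j i r : count (fun k => k <= j) (iota i r) = minn r (j.+1 - i).
Proof. by elim: r i => [|r IHr] i /=; rewrite ?min0n ?IHr; lia. Qed.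

Lemma count_typ_follow t' t m :
  count (fun e : letter => e.1 == t) [seq e <- alphabet m | arrowT t' m e] =
  nfollow t' t m.
Proof.
rewrite count_filter count_cat /= !count_map.
by case: t'; case: t => /=; rewrite ?count_pred0 ?count_leq_iota; lia.
Qed.

Lemma count_typ_alphabet t m :
  count (fun e : letter => e.1 == t) (alphabet m) = nfollow T2 t m + (t == T2).
Proof.
rewrite count_cat /= !count_map.
by case: t => /=; rewrite ?count_pred0 ?count_predT ?size_iota; lia.
Qed.

Definition next_letters (a : nat -> nat) (n : nat) (w : seq letter) : seq letter :=
  if n is 0 then alphabet (a 1)
  else [seq e <- alphabet (a n.+1) | arrow (last (T2, 1) w) (a n.+1) e].

Fixpoint words (a : nat -> nat) (n : nat) : seq (seq letter) :=
  if n is n'.+1 then [seq rcons w e | w <- words a n', e <- next_letters a n' w]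
  else [:: [::]].

Lemma mem_next_letters a n w e :
  (e \in next_letters a n w) =
  inA (a n.+1) e && ((n == 0) || arrow (last (T2, 1) w) (a n.+1) e).
Proof.
by case: n => [|n]; rewrite /next_letters ?mem_filter mem_alphabet // andbC.
Qed.

Lemma allpairs_rcons_uniq (T : eqType) (s : seq (seq T)) (f : seq T -> seq T) :
  uniq s -> (forall w, uniq (f w)) -> uniq [seq rcons w e | w <- s, e <- f w].
Proof.
move=> s_uniq f_uniq; apply: allpairs_uniq_dep => // [[w e] [w' e']] /=.
by move=> _ _ /rcons_inj [-> ->].
Qed.

Lemma words_uniq a n : uniq (words a n).
Proof.
elim: n => //= n IHn; apply: allpairs_rcons_uniq => // w.
by case: n {IHn} => [|n]; [exact: alphabet_uniq | exact/filter_uniq/alphabet_uniq].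
Qed.

Lemma Omega0 a w : Omega a 0 w <-> w = [::].
Proof. by split=> [[/size0nil] | ->] //; split=> //; split=> j; lia. Qed.

Lemma Omega_nil a n : Omega a n [::] -> n = 0.
Proof. by case. Qed.

Lemma Omega_rcons a n w e :
  Omega a n.+1 (rcons w e) <->
  [/\ Omega a n w, inA (a n.+1) e & 0 < n -> arrow (last (T2, 1) w) (a n.+1) e].
Proof.
set d := (T2, 1).
have nth_rconsE j : size w = n ->
    nth d (rcons w e) j = if j < n then nth d w j else if j == n then e else d.
  by move=> <-; rewrite nth_rcons.
have last_nth : 0 < n -> size w = n -> last d w = nth d w n.-1.
  by move=> n_gt0 <-; rewrite nth_last.
split=> [[/eqP] | [[w_size [w_in w_arrow]] e_in e_arrow]].
- rewrite size_rcons eqSS => /eqP w_size [w_in w_arrow].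
  split; first (split=> //; split).
  + move=> j j_le; have := w_in j; rewrite nth_rconsE // ifT; [apply; lia | lia].
  + move=> j j_lt; have := w_arrow j; rewrite !nth_rconsE // !ifT; [apply; lia | lia..].
  + by have := w_in n.+1; rewrite nth_rconsE // ltnn eqxx; apply; lia.
  + move=> n_gt0; have := w_arrow n; rewrite !nth_rconsE // ltnn eqxx ifT; last lia.
    by rewrite last_nth //; apply; lia.
- split; first by rewrite size_rcons w_size.
  split=> j j_range; rewrite !nth_rconsE //.
  + case: ifP => j_lt; first by apply: w_in; lia.
    have -> : j = n.+1 by lia.
    by rewrite /= eqxx.
  + case: (ltnP j n) => j_lt; first by rewrite ifT; [apply: w_arrow | ]; lia.
    have -> : j = n by lia.
    have n_gt0 : 0 < n by lia.
    by rewrite eqxx ltn_predL n_gt0 -last_nth //; apply: e_arrow.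
Qed.

Lemma mem_words a n w : w \in words a n <-> Omega a n w.
Proof.
elim: n w => [|n IHn] w; first by rewrite Omega0 inE; split=> /eqP.
case/lastP: w => [|w e].
  by split=> [/allpairsPdep [w [e [_ _ /(congr1 size)]]] | /Omega_nil //]; rewrite size_rcons.
rewrite Omega_rcons /=; split.
- case/allpairsPdep=> w' [e' [w'_in e'_in /rcons_inj [-> ->]]].
  move: e'_in; rewrite mem_next_letters => /andP [e_in e_arrow].
  by split=> [|//|n_gt0]; [apply/IHn | move: e_arrow; rewrite eqn0Ngt n_gt0].
- case=> w_Omega e_in e_arrow; apply/allpairsPdep; exists w, e; split=> //.
    exact/IHn.
  rewrite mem_next_letters e_in /=.
  by have [-> // | /e_arrow ->] := posnP n; rewrite orbT.
Qed.

Definition ends_with (t : typ) (w : seq letter) : bool := (last (T2, 1) w).1 == t.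

Definition nwords (a : nat -> nat) (n : nat) (t : typ) : nat := count (ends_with t) (words a n).

Lemma sumn_map_typ (T : Type) (g : T -> typ) (f : typ -> nat) (s : seq T) :
  sumn [seq f (g x) | x <- s] =
  f T1 * count (fun x => g x == T1) s + f T2 * count (fun x => g x == T2) s +
  f T3 * count (fun x => g x == T3) s.
Proof.
elim: s => [|x s IHs] /=; first by rewrite !muln0.
by rewrite IHs; case: (g x) => /=; lia.
Qed.

Lemma size_words a n : size (words a n) = nwords a n T1 + nwords a n T2 + nwords a n T3.
Proof.
have := sumn_map_typ (fun w => (last (T2, 1) w).1) (fun=> 1) (words a n).
by rewrite !mul1n => <-; elim: (words a n) => //= w s ->.
Qed.

Lemma nwordsS a n t :
  nwords a n.+1 t =
  sumn [seq count (fun e : letter => e.1 == t) (next_letters a n w) | w <- words a n].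
Proof.
rewrite /nwords /= count_flatten -map_comp; congr sumn; apply: eq_map => w /=.
by rewrite count_map; apply: eq_count => e; rewrite /= /ends_with last_rcons.
Qed.

Lemma nwords1 a t : nwords a 1 t = nfollow T2 t (a 1) + (t == T2).
Proof. by rewrite nwordsS -count_typ_alphabet; apply: addn0. Qed.

Lemma nwordsSS a n t :
  nwords a n.+2 t =
  nfollow T1 t (a n.+2) * nwords a n.+1 T1 + nfollow T2 t (a n.+2) * nwords a n.+1 T2 +
  nfollow T3 t (a n.+2) * nwords a n.+1 T3.
Proof.
rewrite nwordsS -(sumn_map_typ (fun w => (last (T2, 1) w).1) (fun t' => nfollow t' t _)).
by congr sumn; apply: eq_map => w; rewrite count_typ_follow.
Qed.

Lemma qpairS a n :
  qpair a n.+1 = ((qpair a n).2, a n.+1 * (qpair a n).2 + (qpair a n).1).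
Proof. by rewrite /=; case: (qpair a n). Qed.

Lemma qpair_mono a b n : (forall j, 0 < j -> a j <= b j) ->
  (qpair a n).1 <= (qpair b n).1 /\ (qpair a n).2 <= (qpair b n).2.
Proof.
move=> le_ab; elim: n => [//|n [le1 le2]]; rewrite !qpairS /=; split=> //.
by rewrite leq_add // leq_mul // le_ab.
Qed.

Lemma qpair_fst_le_snd a n : (forall j, 0 < j -> 0 < a j) -> (qpair a n).1 <= (qpair a n).2.
Proof.
move=> a_pos; case: n => [//|n]; rewrite qpairS /=.
by rewrite (leq_trans _ (leq_addr _ _)) // leq_pmull ?a_pos.
Qed.

Definition bump1 (a : nat -> nat) (j : nat) : nat := a j + (j == 1).

Lemma qpair_bump1_le a n : 0 < a 1 ->
  (qpair (bump1 a) n).1 <= 2 * (qpair a n).1 /\ (qpair (bump1 a) n).2 <= 2 * (qpair a n).2.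
Proof.
move=> a1_pos; elim: n => [//|n [le1 le2]]; rewrite !qpairS /=; split=> //.
case: n le1 le2 => [|n] le1 le2; first by rewrite /bump1 /=; lia.
rewrite /bump1 addn0 mulnDr mulnCA leq_add // leq_mul //.
Qed.

Lemma nwords_qpair a n : (forall j, 0 < j -> 0 < a j) ->
  nwords a n.+1 T2 + nwords a n.+1 T3 = (qpair (bump1 a) n.+1).2 /\
  nwords a n.+1 T1 = nwords a n.+1 T3 + (qpair (bump1 a) n.+1).1.
Proof.
move=> a_pos; elim: n => [|n [IH2 IH1]].
  by rewrite !nwords1 /= /bump1 /=; lia.
rewrite !nwordsSS qpairS (_ : bump1 a n.+2 = a n.+2); last by rewrite /bump1 addn0.
move: IH2 IH1; case: (qpair _ n.+1) => [x y] /= IH2 IH1.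
have := a_pos n.+2 isT; case: (a n.+2) => [//|m] _ /=.
nia.
Qed.

Theorem lemma4p3 (a : nat -> nat) (apos : forall j, 1 <= j -> 0 < a j) (n : nat) :
  exists s : seq (seq letter),
    [/\ uniq s, (forall w, w \in s <-> Omega a n w) &
        q a n <= size s <= 10 * q a n].
Proof.
exists (words a n); split; [exact: words_uniq | exact: mem_words |].
case: n => [//|n]; rewrite size_words /q.
have [c23_eq c1_eq] := nwords_qpair n apos.
have [_ q_le] := @qpair_mono a (bump1 a) n.+1 (fun j _ => leq_addr _ _).
have [qb1_le qb2_le] := qpair_bump1_le n.+1 (apos 1 isT).
have := qpair_fst_le_snd n.+1 apos.
lia.
Qed.
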